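(* Let $n>2$, $V=\mathbb{F}_2^n$, and let $M$ be any maximal subgroup of the translation group $T$. Then $C_{\mathrm{Sym}(V)}(M)<\mathrm{AGL}(V)$, and $|C_{\mathrm{Sym}(V)}(M)|=2^{2n-1}$.
   Context: $T=\{\sigma_v: v\in V\}\le\mathrm{Sym}(V)$ is the group of translations $\sigma_v:x\mapsto x+v$. $\mathrm{AGL}(V)=T\rtimes\mathrm{GL}(V)$ is the affine group, the group of maps $x\mapsto xL+v$ with $L\in\mathrm{GL}(V)$, $v\in V$; it equals the normaliser of $T$ in $\mathrm{Sym}(V)$. *)

From HB Require Import structures.
From mathcomp Require Import all_boot all_order all_algebra all_fingroup all_solvable all_field.
Set Implicit Arguments. Unset Strict Implicit. Unset Printing Implicit Defensive.
Import GRing.Theory.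
Local Open Scope ring_scope.

(* V = F_2^n, modelled as row vectors of length n over 'F_2. Sym(V) = {perm V}. *)
Notation Vsp n := 'rV['F_2]_n.

Lemma transl_inj n (v : Vsp n) : injective (fun x : Vsp n => x + v).
Proof. exact: addIr. Qed.

Definition transl n (v : Vsp n) : {perm Vsp n} := perm (@transl_inj n v).

Definition Transl n : {set {perm Vsp n}} := [set transl v | v : Vsp n].

Definition AGL n : {set {perm Vsp n}} :=
  [set g : {perm Vsp n} | [exists L : 'M['F_2]_n, [exists v : Vsp n,
      (L \in unitmx) && [forall x : Vsp n, g x == x *m L + v]]]].

(* The centraliser of a subgroup M < T of index 2 consists of the permutations
   commuting with all translations by vectors of the hyperplane W = {m | sigma_m \in M}.
   Such a g is determined by a = g 0 and by its value at one point outside W, and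
   writing phi for the linear functional with kernel W these are exactly the maps
   x |-> x + phi(x) c + a with c in W: an affine map whose linear part is the
   transvection 1 + phi ⊗ c.  Hence |C(M)| = |V| |W| = 2^n 2^(n-1), C(M) <= AGL(V),
   and a transvection whose functional is not phi lies in AGL(V) but not in C(M). *)
From mathcomp Require Import all_boot all_order all_algebra all_fingroup all_solvable all_field.
From mathcomp Require Import zify.
Set Implicit Arguments. Unset Strict Implicit. Unset Printing Implicit Defensive.
Import GRing.Theory.
Local Open Scope ring_scope.

Section Transvection.
Variables (R : comUnitRingType) (n : nat) (phi : 'rV[R]_n -> R).
Hypothesis phiD : {morph phi : x y / x + y}.
Hypothesis phiZ : forall a x, phi (a *: x) = a * phi x.

Definition transvection_mx (c : 'rV[R]_n) : 'M[R]_n :=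
  1%:M + \matrix_(i, j) (phi 'e_i * c 0 j).

Lemma mul_transvection_mx x c : x *m transvection_mx c = x + phi x *: c.
Proof.
have phi0 : phi 0 = 0 by apply: (@addrI _ (phi 0)); rewrite -phiD !addr0.
rewrite mulmxDr mulmx1; congr (_ + _); apply/matrixP=> i j; rewrite !mxE ord1.
rewrite {2}(row_sum_delta x) (big_morph phi phiD phi0) mulr_suml.
by apply: eq_bigr=> k _; rewrite mxE phiZ mulrA.
Qed.

Lemma transvection_mx_unit c : phi c = 0 -> transvection_mx c \in unitmx.
Proof.
move=> phic; suff: transvection_mx c *m transvection_mx (- c) = 1%:M.
  by case/mulmx1_unit.
apply/row_matrixP=> i; rewrite row_mul.
have -> : row i (transvection_mx c) = row i 1%:M *m transvection_mx c.
  by rewrite -row_mul mul1mx.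
by rewrite !mul_transvection_mx phiD phiZ phic mulr0 addr0 scalerN addrK.
Qed.

End Transvection.

Lemma F2_cases (s : 'F_2) : s = 0 \/ s = 1.
Proof. by case: s => [[|[|k]] Hk] //; [left|right]; apply: val_inj. Qed.

Lemma addvv_F2 m k (x : 'M['F_2]_(m, k)) : x + x = 0.
Proof. by rewrite -mulr2n -scaler_nat pchar_Fp_0 ?scale0r. Qed.

Lemma addvKv_F2 m k (x y : 'M['F_2]_(m, k)) : x + (x + y) = y.
Proof. by rewrite addrA addvv_F2 add0r. Qed.

Lemma additive_F2_scalable n (phi : Vsp n -> 'F_2) :
  {morph phi : x y / x + y} -> forall a x, phi (a *: x) = a * phi x.
Proof.
move=> phiD a x; have phi0 : phi 0 = 0.
  by apply: (@addrI _ (phi 0)); rewrite -phiD !addr0.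
by case: (F2_cases a) => ->; rewrite ?scale0r ?mul0r ?scale1r ?mul1r.
Qed.

Lemma nonzero_F2_coord n (w : Vsp n) : w != 0 -> exists i, w 0 i = 1.
Proof.
move=> nz_w; have [i w_i] : exists i, w 0 i != 0.
  apply/existsP; apply: contraR nz_w => /existsPn w0.
  by apply/eqP/rowP=> i; apply/eqP; rewrite mxE; apply/negPn.
by exists i; case: (F2_cases (w 0 i)) w_i => ->; rewrite ?eqxx.
Qed.

Lemma affine_perm_inj n (L : 'M['F_2]_n) (a : Vsp n) :
  L \in unitmx -> injective (fun x : Vsp n => x *m L + a).
Proof. by rewrite -row_free_unit => /row_free_inj fL x y /addIr /fL. Qed.

Definition affine_perm n (L : 'M['F_2]_n) (a : Vsp n) (uL : L \in unitmx) :=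
  perm (@affine_perm_inj n L a uL).

Lemma affine_permE n (L : 'M['F_2]_n) a (uL : L \in unitmx) x :
  affine_perm a uL x = x *m L + a.
Proof. exact: permE. Qed.

Lemma affine_perm_AGL n (L : 'M['F_2]_n) a (uL : L \in unitmx) :
  affine_perm a uL \in AGL n.
Proof.
rewrite inE; apply/existsP; exists L; apply/existsP; exists a.
by rewrite uL; apply/forallP=> x; rewrite affine_permE.
Qed.

Lemma translE n (v x : Vsp n) : transl v x = x + v.
Proof. exact: permE. Qed.

Lemma translD n (x y : Vsp n) : transl (x + y) = (transl x * transl y)%g.
Proof. by apply/permP=> z; rewrite permM !translE addrA. Qed.

Lemma transl0 n : transl (0 : Vsp n) = 1%g.
Proof. by apply/permP=> z; rewrite translE perm1 addr0. Qed.

Lemma translV n (x : Vsp n) : ((transl x)^-1)%g = transl x.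
Proof. by apply/eqP; rewrite eq_invg_mul -translD addvv_F2 transl0. Qed.

Lemma inj_transl n : injective (@transl n).
Proof. by move=> x y /(congr1 (fun p : {perm _} => p 0)); rewrite !translE !add0r. Qed.

Lemma Transl_group_set n : group_set (Transl n).
Proof.
apply/group_setP; split; first by apply/imsetP; exists 0; rewrite ?transl0.
by move=> _ _ /imsetP[x _ ->] /imsetP[y _ ->]; rewrite -translD imset_f.
Qed.

Canonical Transl_group n := Group (Transl_group_set n).

Lemma card_Vsp n : #|{: Vsp n}| = (2 ^ n)%N.
Proof. by rewrite card_mx card_Fp // mul1n. Qed.

Lemma card_Transl n : #|Transl n| = (2 ^ n)%N.
Proof. by rewrite card_imset ?card_Vsp //; apply: inj_transl. Qed.

Lemma Transl_pgroup n : (2.-group (Transl n))%g.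
Proof. by rewrite /pgroup card_Transl pnatX pnat_id. Qed.

Section Centraliser.
Variables (n : nat) (M : {group {perm Vsp n}}).
Hypothesis sMT : M \subset Transl n.

Definition transl_preim : {set Vsp n} := [set x | transl x \in M].

Lemma card_transl_preim : #|transl_preim| = #|M|.
Proof.
rewrite -(card_imset _ (@inj_transl n)); apply: eq_card => t.
apply/imsetP/idP => [[x] | Mt]; first by rewrite inE => Mx ->.
by case/imsetP: (subsetP sMT t Mt) => x _ def_t; exists x; rewrite // inE -def_t.
Qed.

Lemma centM_translP (g : {perm Vsp n}) :
  reflect (forall m x, transl m \in M -> g (x + m) = g x + m) (g \in 'C(M))%g.
Proof.
apply: (iffP centP) => [cMg m x Mm | cMg t Mt].
  by have := congr1 (fun p : {perm _} => p x) (cMg _ Mm); rewrite !permM !translE => ->.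
case/imsetP: (subsetP sMT t Mt) => m _ def_t; rewrite def_t in Mt *.
by apply/permP=> x; rewrite !permM !translE cMg.
Qed.

End Centraliser.

Section MaximalTranslations.
Variables (n : nat) (M : {group {perm Vsp n}}).
Hypothesis maxM : maximal M (Transl n).

Let sMT : M \subset Transl n := proper_sub (maxgroupp maxM).

Lemma card_maximal_transl : #|M| = (2 ^ n.-1)%N.
Proof.
have := Lagrange sMT; rewrite (p_maximal_index (Transl_pgroup n) maxM) card_Transl.
move: #|M| => m; case: n => [|k] /=.
  by rewrite expn0 => /eqP; rewrite muln_eq1 andbF.
by rewrite expnSr => /eqP; rewrite eqn_pmul2r // => /eqP.
Qed.

Lemma transl_addM x y : transl x \in M -> transl y \in M -> transl (x + y) \in M.
Proof. by move=> Mx My; rewrite translD groupM. Qed.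

(* Outside an index-2 subgroup every element lies in its unique nontrivial coset. *)
Lemma transl_addM_out x y :
  transl x \notin M -> transl y \notin M -> transl (x + y) \in M.
Proof.
have iTM := p_maximal_index (Transl_pgroup n) maxM.
have cosetM z : transl z \notin M -> (M :* transl z)%g = Transl n :\: M.
  by move=> Mz; apply: rcoset_index2; rewrite // inE Mz imset_f.
move=> Mx My; have : transl x \in (M :* transl y)%g.
  by rewrite cosetM // inE Mx imset_f.
by rewrite mem_rcoset translV -translD.
Qed.

Lemma transl_addM_mix x y :
  transl x \in M -> transl y \notin M -> transl (x + y) \notin M.
Proof.
move=> Mx; apply: contra => Mxy.
by rewrite -[y](addvKv_F2 x) transl_addM.
Qed.

Definition phiM (x : Vsp n) : 'F_2 := (transl x \notin M)%:R.

Lemma phiM_eq0 x : (phiM x == 0) = (transl x \in M).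
Proof. by rewrite /phiM; case: (transl x \in M); rewrite ?eqxx ?oner_eq0. Qed.

Lemma phiMD : {morph phiM : x y / x + y}.
Proof.
move=> x y; rewrite /phiM.
case Mx: (transl x \in M); case My: (transl y \in M) => /=.
- by rewrite transl_addM ?addr0.
- by rewrite transl_addM_mix ?Mx ?My ?add0r.
- by rewrite addrC transl_addM_mix ?Mx ?My ?addr0.
- by rewrite transl_addM_out ?Mx ?My //; apply: val_inj.
Qed.

Let phiMZ := additive_F2_scalable phiMD.
Let phiM_transvectionE := mul_transvection_mx phiMD phiMZ.
Let phiM_transvection_unit := transvection_mx_unit phiMD phiMZ.

Lemma exists_phiM1 : exists u, phiM u = 1.
Proof.
have [_ [t Tt Mt]] := properP (maxgroupp maxM).
by case/imsetP: Tt Mt => u _ -> Mu; exists u; rewrite /phiM Mu.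
Qed.

Lemma centM_phiM_eq0 g u :
  (g \in 'C(M))%g -> phiM u = 1 -> phiM (g u + u + g 0) = 0.
Proof.
move=> /(centM_translP sMT) cMg u1; have: transl (g u + g 0) \notin M.
  apply/negP=> M_gu; have := cMg _ 0 M_gu.
  rewrite add0r addrC addrA addvv_F2 add0r => /perm_inj def_u.
  by move: M_gu; rewrite addrC def_u -phiM_eq0 u1 oner_eq0.
rewrite addrAC phiMD u1 /phiM => ->; exact: val_inj.
Qed.

Lemma centM_affineE g u : (g \in 'C(M))%g -> phiM u = 1 ->
  forall x, g x = x *m transvection_mx phiM (g u + u + g 0) + g 0.
Proof.
move/(centM_translP sMT)=> cMg u1 x; rewrite phiM_transvectionE.
case Mx: (transl x \in M).
  by rewrite /phiM Mx scale0r addr0 -{1}[x]add0r cMg // addrC.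
have Mux : transl (u + x) \in M.
  by rewrite transl_addM_out ?Mx //; rewrite -phiM_eq0 u1 oner_eq0.
rewrite /phiM Mx scale1r -[x in g x](addvKv_F2 u) cMg //.
by rewrite -(addrA x) -(addrA (g u + u)) addvv_F2 addr0 addrC addrA.
Qed.

Lemma affine_transvection_centM a c (c0 : phiM c = 0) :
  (affine_perm a (phiM_transvection_unit c0) \in 'C(M))%g.
Proof.
apply/(centM_translP sMT)=> m x Mm; rewrite !affine_permE !phiM_transvectionE.
have m0 : phiM m = 0 by apply/eqP; rewrite phiM_eq0.
by rewrite phiMD m0 addr0 (addrAC x) [LHS]addrAC.
Qed.

Lemma centM_sub_AGL : ('C(M) \subset AGL n)%g.
Proof.
have [u u1] := exists_phiM1.
apply/subsetP=> g cMg; have c0 := centM_phiM_eq0 cMg u1.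
suff -> : g = affine_perm (g 0) (phiM_transvection_unit c0).
  exact: affine_perm_AGL.
by apply/permP=> x; rewrite affine_permE -centM_affineE.
Qed.

Lemma card_centM : #|('C(M))%g| = (2 ^ n * 2 ^ n.-1)%N.
Proof.
have [u u1] := exists_phiM1.
pose F (g : {perm Vsp n}) := (g 0, g u + u + g 0).
have injF : {in 'C(M)%g &, injective F}.
  move=> g1 g2 cMg1 cMg2 [e0 ec]; apply/permP=> x.
  by rewrite (centM_affineE cMg1 u1) (centM_affineE cMg2 u1) ec e0.
have -> : #|('C(M))%g| = #|setX [set: Vsp n] (transl_preim M)|.
  rewrite -(card_in_imset injF); apply: eq_card => -[a c].
  rewrite !inE -phiM_eq0 /=; apply/imsetP/eqP => [[g cMg [_ ->]] | c0].
    exact: centM_phiM_eq0.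
  exists (affine_perm a (phiM_transvection_unit c0)).
    exact: affine_transvection_centM.
  rewrite /F !affine_permE mul0mx add0r phiM_transvectionE u1 scale1r.
  by rewrite (addrAC _ a u) -(addrA _ a a) addvv_F2 addr0 (addrAC u) addvv_F2 add0r.
by rewrite cardsX cardsT card_Vsp (card_transl_preim sMT) card_maximal_transl.
Qed.

Lemma exists_nonzero_transl_preim :
  (1 < n)%N -> exists2 w : Vsp n, transl w \in M & w != 0.
Proof.
move=> n_gt1; have : ~~ (transl_preim M \subset [set 0]).
  apply: contraTN isT => /subset_leq_card.
  rewrite cards1 (card_transl_preim sMT) card_maximal_transl leqNgt.
  by rewrite -[X in (X < _)%N](expn0 2) ltn_exp2l // -subn1 subn_gt0 n_gt1.
by case/subsetPn=> w; rewrite !inE => Mw nz_w; exists w.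
Qed.

Lemma proper_centM_AGL : (1 < n)%N -> ('C(M) \proper AGL n)%g.
Proof.
move=> n_gt1; rewrite properE centM_sub_AGL /=.
have [w Mw nz_w] := exists_nonzero_transl_preim n_gt1.
have [i w_i] := nonzero_F2_coord nz_w.
have [j ne_ji] : exists j : 'I_n, j != i.
  have [def_i | ne_i] := eqVneq i (Ordinal (ltnW n_gt1)).
    by exists (Ordinal n_gt1); rewrite def_i.
  by exists (Ordinal (ltnW n_gt1)); rewrite eq_sym.
pose phi (x : Vsp n) := x 0 i.
have phiD : {morph phi : x y / x + y} by move=> x y; rewrite /phi mxE.
have phiZ a x : phi (a *: x) = a * phi x by rewrite /phi mxE.
have phi_ej : phi 'e_j = 0 by rewrite /phi mxE eqxx eq_sym (negbTE ne_ji).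
apply/subsetPn; exists (affine_perm 0 (transvection_mx_unit phiD phiZ phi_ej)).
  exact: affine_perm_AGL.
apply/negP=> /(centM_translP sMT)/(_ w 0 Mw).
rewrite !affine_permE !mul_transvection_mx // !add0r addr0 /phi w_i scale1r.
move/(congr1 (fun v : Vsp n => v 0 j)); rewrite !mxE !eqxx /=.
by rewrite mul0r !add0r -{2}[w 0 j]addr0 => /addrI/eqP; rewrite oner_eq0.
Qed.

End MaximalTranslations.

Theorem mainTheorem5 (n : nat) (hn : (2 < n)%N) (M : {group {perm 'rV['F_2]_n}})
  (hM : maximal M (Transl n)) :
  ('C(M) \proper AGL n)%g /\ #|'C(M)%g| = (2 ^ (2 * n - 1))%N.
Proof.
split; first exact: proper_centM_AGL (ltnW hn).
rewrite card_centM // -expnD; congr (2 ^ _)%N; lia.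
Qed.
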